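(* Let $X$, $\mathcal{L}$, $\mathbb{H}$, $v$, $h$, $R$, $\tilde v$ and $S=S(R)$ be as below, with $S$ finitely generated and generating $\mathbb{Z}^{n+1}$, and let $\tilde\lambda:\mathbb{Z}^{n+1}\to M$ be the homomorphism described below. Let $R'=R^{\mathbb{H}}$ be the subalgebra of $\mathbb{H}$-invariants and $S(R')=\tilde v(R'\setminus\{0\})$. Then $S(R')=S\cap\ker\tilde\lambda_\mathbb{R}$, where $\tilde\lambda_\mathbb{R}$ is the $\mathbb{R}$-linear extension of $\tilde\lambda$. In particular $S(R')$ is finitely generated.
   Context: $\mathbb{H}$ is an algebraic torus with character lattice $M$, acting on a projective variety $X$ of dimension $n$ with an $\mathbb{H}$-linearized very ample line bundle $\mathcal{L}$; $L=H^0(X,\mathcal{L})$, $L^k$ the image of $L^{\otimes k}$ in $H^0(X,\mathcal{L}^{\otimes k})$, $R=\bigoplus_k L^k$. $v:\mathbb{C}(X)\setminus\{0\}\to\mathbb{Z}^n$ is an $\mathbb{H}$-invariant valuation with one-dimensional leaves, $0\ne h\in L$ is an $\mathbb{H}$-weight vector, $\tilde v(f)=(k,v(f/h^k))$ for $f\in R_k\setminus\{0\}$, $S=\{\tilde v(f)\}$. It is known that for each $(k,a)\in S$ there is an $\mathbb{H}$-weight vector $f\in R_k$ with $\tilde v(f)=(k,a)$, that its weight depends only on $(k,a)$, and that the resulting map $S\to M$ is a semigroup homomorphism; $\tilde\lambda:\mathbb{Z}^{n+1}\to M$ is its unique extension to a group homomorphism. *)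

From HB Require Import structures.
From mathcomp Require Import all_boot all_order all_algebra.
From mathcomp Require Import reals complex.
Set Implicit Arguments. Unset Strict Implicit. Unset Printing Implicit Defensive.
Import Order.TTheory GRing.Theory Num.Theory.
Local Open Scope ring_scope.

(* Abstract algebraic model of the setting:
   C = ℂ = Rr[i];  A = an ambient commutative C-algebra containing
   R = ⊕_k R_k (Rk k = the degree-k piece L^k);
   H = (C^×)^r  (points t : 'rV[C]_r with nonzero entries),  M = Z^r;
   act t : the (linearised) action of t ∈ H on sections;
   vt f  = v(f / h^k) ∈ Z^n for f ∈ R_k \ {0};  vtil k f = (k, vt f) ∈ Z^{1+n};
   vle   = the total group order on Z^n with respect to which v is a valuation;
   lam   = the homomorphism λ̃ : Z^{1+n} -> M, as an integer matrix acting on rows. *)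

Section Setting.
Variable Rr : realType.
Local Notation C := (Rr[i]).
Variables (n r : nat) (A : comAlgType C) (Rk : nat -> {pred A})
  (act : 'rV[C]_r -> A -> A) (h : A) (vt : A -> 'rV[int]_n)
  (vle : rel 'rV[int]_n) (lam : 'M[int]_(1 + n, r)).

Definition in_torus (t : 'rV[C]_r) : Prop := forall i, t 0 i != 0.

Definition character (m : 'rV[int]_r) (t : 'rV[C]_r) : C :=
  \prod_(i < r) (t 0 i) ^ (m 0 i).

Definition torus_mul (t s : 'rV[C]_r) : 'rV[C]_r := \row_i (t 0 i * s 0 i).

Definition weight_vector (k : nat) (m : 'rV[int]_r) (f : A) : Prop :=
  [/\ f \in Rk k, f != 0 &
      forall t, in_torus t -> act t f = character m t *: f].

Definition invariant (f : A) : Prop := forall t, in_torus t -> act t f = f.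

Definition vtil (k : nat) (f : A) : 'rV[int]_(1 + n) :=
  row_mx (const_mx (Posz k) : 'rV[int]_1) (vt f).

Definition S_R (s : 'rV[int]_(1 + n)) : Prop :=
  exists k f, [/\ f \in Rk k, f != 0 & s = vtil k f].

(* S(R') with R' = R^H; R' is graded with R'_k = (R_k)^H *)
Definition S_Rinv (s : 'rV[int]_(1 + n)) : Prop :=
  exists k f, [/\ f \in Rk k, f != 0, invariant f & s = vtil k f].

Definition lam_R (x : 'rV[Rr]_(1 + n)) : 'rV[Rr]_r := x *m map_mx intr lam.

Definition strictly_above (a b : 'rV[int]_n) := vle a b && (a != b).

Definition setting_axioms : Prop :=
  [/\
   [/\ forall a, vle a a,
       forall a b c, vle a b -> vle b c -> vle a c,
       forall a b, vle a b -> vle b a -> a = b,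
       forall a b, vle a b || vle b a &
       forall a b c, vle a b -> vle (a + c) (b + c)],
   [/\ forall k, 0 \in Rk k /\
         (forall (c : C) x y, x \in Rk k -> y \in Rk k -> c *: x + y \in Rk k),
       forall k l x y, x \in Rk k -> y \in Rk l -> x * y \in Rk (k + l),
       forall x, x \in Rk 0 <-> exists c : C, x = c%:A,
       forall x y : A, x * y = 0 -> x = 0 \/ y = 0 &
       [/\ forall x : A, exists N (xs : nat -> A),
             (forall i, xs i \in Rk i) /\ x = \sum_(i < N) xs i,
           forall N (xs : nat -> A), (forall i, xs i \in Rk i) ->
             \sum_(i < N) xs i = 0 -> forall i, (i < N)%N -> xs i = 0,
           forall k x, x \in Rk k.+1 -> exists l : seq (A * A),
             (forall p, p \in l -> p.1 \in Rk 1 /\ p.2 \in Rk k) /\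
             x = \sum_(p <- l) p.1 * p.2 &
           exists b : seq A, forall x, x \in Rk 1 ->
             exists c : nat -> C, x = \sum_(i < size b) c i *: b`_i]],
   (* H acts rationally by graded C-algebra automorphisms *)
   [/\ forall t, in_torus t -> forall (c : C) x y,
         act t (c *: x + y) = c *: act t x + act t y,
       forall t, in_torus t -> forall x y, act t (x * y) = act t x * act t y
                                           /\ act t 1 = 1,
       forall t k x, in_torus t -> x \in Rk k -> act t x \in Rk k,
       (forall x, act (const_mx 1) x = x) /\
       (forall t s x, in_torus t -> in_torus s ->
                      act (torus_mul t s) x = act t (act s x)) &
       forall k x, x \in Rk k -> exists l : seq ('rV[int]_r * A),
         (forall p, p \in l -> p.2 \in Rk k /\
            forall t, in_torus t -> act t p.2 = character p.1 t *: p.2) /\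
         x = \sum_(p <- l) p.2],
   (* h ∈ L is a nonzero weight vector, and v(h/h) = 0;
      v is an H-invariant valuation with one-dimensional leaves, trivial on C *)
   ((exists m, weight_vector 1 m h) /\ vt h = 0) /\
   [/\ forall k l f g, f \in Rk k -> g \in Rk l -> f != 0 -> g != 0 ->
         vt (f * g) = vt f + vt g,
       forall k (c : C) f, f \in Rk k -> f != 0 -> c != 0 -> vt (c *: f) = vt f,
       forall k f g, f \in Rk k -> g \in Rk k -> f != 0 -> g != 0 ->
         f + g != 0 -> vle (vt f) (vt (f + g)) || vle (vt g) (vt (f + g)),
       forall t k f, in_torus t -> f \in Rk k -> f != 0 -> vt (act t f) = vt f &
       forall k f g, f \in Rk k -> g \in Rk k -> f != 0 -> g != 0 ->
         vt f = vt g -> exists c : C,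
           f = c *: g \/ (f - c *: g != 0 /\ strictly_above (vt f) (vt (f - c *: g)))] &
   (* known: every (k,a) ∈ S is the value of a weight vector in R_k *)
   (forall k f, f \in Rk k -> f != 0 ->
     exists m g, weight_vector k m g /\ vtil k g = vtil k f) /\
   (* λ̃ : Z^{1+n} -> M extends the map S -> M, (k,a) ↦ weight *)
   (forall k m f, weight_vector k m f -> vtil k f *m lam = m)].

End Setting.

Definition fin_gen_monoid (d : nat) (P : 'rV[int]_d -> Prop) : Prop :=
  exists gens : seq 'rV[int]_d,
    (forall g, g \in gens -> P g) /\
    forall s, P s <-> exists c : nat -> nat, s = \sum_(i < size gens) gens`_i *+ c i.

Definition generates_group (d : nat) (P : 'rV[int]_d -> Prop) : Prop :=
  forall z : 'rV[int]_d, exists l : seq ('rV[int]_d * int),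
    (forall p, p \in l -> P p.1) /\ z = \sum_(p <- l) p.1 *~ p.2.

From Pilot Require Import Defs.
From HB Require Import structures.
From mathcomp Require Import all_boot all_order all_algebra.
From mathcomp Require Import reals complex.
From Stdlib Require Import Classical.
Import Order.TTheory GRing.Theory Num.Theory.

(* Every value in S is the value of a weight vector, and λ̃ maps it to that
   weight. Hence a value lies in S(R') iff it is the value of a weight-zero,
   i.e. invariant, vector iff λ̃ kills it; over the reals the kernel meets the
   integer points in the same set since λ̃ has integer entries.
   For finite generation, write S = {Σ c_i s_i | c ∈ N^g}: then S ∩ ker λ̃ is
   the image of the monoid of solutions c ∈ N^g of Σ c_i λ̃(s_i) = 0, and by
   Dickson's lemma that monoid is generated by its finitely many minimal
   nonzero elements. *)

Definition zero_fn : nat -> nat := fun=> 0%N.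

Definition all_nth (P : (nat -> nat) -> Prop) (F : seq (nat -> nat)) :=
  forall j, (j < size F)%N -> P (nth zero_fn F j).

Definition le_on (g : nat) (q p : nat -> nat) :=
  forall i, (i < g)%N -> (q i <= p i)%N.

Definition lower_cover (g : nat) (P : (nat -> nat) -> Prop) (F : seq (nat -> nat)) :=
  all_nth P F /\ forall p, P p -> exists2 j, (j < size F)%N & le_on g (nth zero_fn F j) p.

Lemma all_nth_cat (P : (nat -> nat) -> Prop) (F G : seq (nat -> nat)) :
  all_nth P F -> all_nth P G -> all_nth P (F ++ G).
Proof.
move=> PF PG j; rewrite size_cat nth_cat.
case: (ltnP j (size F)) => [ltj _|le_Fj ltj]; first exact: PF.
by apply: PG; rewrite -(ltn_add2l (size F)) subnKC.
Qed.

Lemma le_on_nth_catr (g : nat) (F G : seq (nat -> nat)) (j : nat) (p : nat -> nat) :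
  le_on g (nth zero_fn G j) p -> le_on g (nth zero_fn (F ++ G) (size F + j)) p.
Proof. by rewrite nth_cat ltnNge leq_addr /= addKn. Qed.

(* One g-dimensional cover for each of the finitely many values below m of
   coordinate g. *)
Lemma lower_cover_bounded {g : nat} (P : (nat -> nat) -> Prop) :
  (forall Q, exists F, lower_cover g Q F) ->
  forall m, exists G, all_nth P G /\
    forall p, P p -> (p g < m)%N ->
      exists2 j, (j < size G)%N & le_on g.+1 (nth zero_fn G j) p.
Proof.
move=> cover; elim=> [|m [G [PG coverG]]]; first by exists [::].
have [F [PF coverF]] := cover (fun p => P p /\ p g = m).
exists (G ++ F); split; first by apply: all_nth_cat => // j /PF [].
move=> p Pp; rewrite ltnS leq_eqVlt => /orP[/eqP pg_m|lt_pg_m].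
  have [j ltj le_jp] := coverF p (conj Pp pg_m).
  exists (size G + j)%N; first by rewrite size_cat ltn_add2l.
  apply: le_on_nth_catr => i; rewrite ltnS leq_eqVlt => /orP[/eqP ->|]; last exact: le_jp.
  by have [_ ->] := PF j ltj; rewrite pg_m.
have [j ltj le_jp] := coverG p Pp lt_pg_m.
by exists j; rewrite ?size_cat ?ltn_addr ?nth_cat ?ltj.
Qed.

(* An element p of P lies above some element q of a cover F0
   of P for the first g coordinates; either p g >= q g, or p g is below the
   maximum M of the g-th coordinates over F0 and lower_cover_bounded applies. *)
Lemma dickson (g : nat) (P : (nat -> nat) -> Prop) : exists F, lower_cover g P F.
Proof.
elim: g P => [|g IH] P.
  case: (classic (exists p, P p)) => [[p Pp]|noP].
    by exists [:: p]; split=> [[]|q _] //; exists 0%N.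
  by exists [::]; split=> // p Pp; case: noP; exists p.
have [F0 [PF0 coverF0]] := IH P.
pose M := (\max_(j < size F0) nth zero_fn F0 j g)%N.
have [G [PG coverG]] := lower_cover_bounded P IH M.
exists (F0 ++ G); split; first exact: all_nth_cat.
move=> p Pp; have [j ltj le_jp] := coverF0 p Pp.
case: (leqP (nth zero_fn F0 j g) (p g)) => [le_g|lt_g].
  exists j; first by rewrite size_cat ltn_addr.
  by rewrite nth_cat ltj => i; rewrite ltnS leq_eqVlt => /orP[/eqP ->|/le_jp].
have lt_pg_M : (p g < M)%N.
  apply: (leq_trans lt_g).
  exact: (@leq_bigmax_cond _ _ (fun j0 : 'I_(size F0) => nth zero_fn F0 j0 g) (Ordinal ltj)).
have [k ltk le_kp] := coverG p Pp lt_pg_M.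
exists (size F0 + k)%N; first by rewrite size_cat ltn_add2l.
exact: le_on_nth_catr.
Qed.

Local Open Scope ring_scope.

Definition ncomb {V : nmodType} (v : seq V) (c : nat -> nat) : V :=
  \sum_(i < size v) v`_i *+ c i.

Section NatCombinations.
Context {V : nmodType} {v : seq V}.

Lemma eq_ncomb {c1 c2 : nat -> nat} :
  (forall i, (i < size v)%N -> c1 i = c2 i) -> ncomb v c1 = ncomb v c2.
Proof. by move=> eq_c; apply: eq_bigr => i _; rewrite eq_c. Qed.

Lemma ncombD (c1 c2 : nat -> nat) :
  ncomb v (fun i => c1 i + c2 i)%N = ncomb v c1 + ncomb v c2.
Proof. by rewrite /ncomb -big_split; apply: eq_bigr => i _; rewrite mulrnDr. Qed.

Lemma ncomb_map (W : nmodType) (f : {additive V -> W}) (c : nat -> nat) :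
  ncomb (map f v) c = f (ncomb v c).
Proof.
rewrite /ncomb raddf_sum size_map; apply: eq_bigr => i _.
by rewrite (nth_map 0) // raddfMn.
Qed.

Lemma ncomb_nested (F : seq (nat -> nat)) (e : nat -> nat) :
  ncomb (map (ncomb v) F) e =
  ncomb v (fun i => \sum_(j < size F) nth zero_fn F j i * e j)%N.
Proof.
rewrite [LHS]/ncomb size_map.
under eq_bigr do rewrite (nth_map zero_fn) // /ncomb -sumrMnl.
rewrite exchange_big /=; apply: eq_bigr => i _.
by rewrite -sumrMnr; apply: eq_bigr => j _; rewrite mulrnA.
Qed.

End NatCombinations.

Lemma sum_nat_mul_indicator (a : nat -> nat) (m j : nat) : (j < m)%N ->
  (\sum_(k < m) a k * (k == j :> nat) = a j)%N.
Proof.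
move=> ltj; rewrite (bigD1 (Ordinal ltj)) //= eqxx muln1 big1 ?addn0 // => k ne_kj.
rewrite (_ : (k == j :> nat) = false) ?muln0 //.
by apply: contraNF ne_kj => /eqP eq_kj; apply/eqP/val_inj.
Qed.

(* Subtracting a minimal solution q <= c from a solution c leaves a solution:
   ncomb w c = ncomb w (c - q) + 0, with no cancellation needed in V. *)
Lemma ncomb_kernel_fin_gen {V : nmodType} (w : seq V) :
  exists F : seq (nat -> nat),
    (forall j, (j < size F)%N -> ncomb w (nth zero_fn F j) = 0) /\
    forall c, ncomb w c = 0 -> exists e : nat -> nat,
      forall i, (i < size w)%N -> c i = (\sum_(j < size F) nth zero_fn F j i * e j)%N.
Proof.
pose weight (c : nat -> nat) := (\sum_(i < size w) c i)%N.
have [F [solF coverF]] :=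
  dickson (size w) (fun c => ncomb w c = 0 /\ (0 < weight c)%N).
exists F; split=> [j /solF [] //|c].
elim: {c}(weight c).+1 {-2}c (ltnSn (weight c)) => [//|N IH] c lt_cN wc0.
case: (posnP (weight c)) => [c0|c_pos].
  exists (fun=> 0%N) => i lti; under eq_bigr do rewrite muln0; rewrite big1 //.
  by apply/eqP; rewrite -leqn0 -c0 /weight (bigD1 (Ordinal lti)) //= leq_addr.
have [j ltj le_jc] := coverF c (conj wc0 c_pos).
set q := nth zero_fn F j in le_jc; have [wq0 q_pos] := solF j ltj.
pose c' i := (c i - q i)%N.
have c_split i : (i < size w)%N -> c i = (c' i + q i)%N by move/le_jc/subnK.
have wc'0 : ncomb w c' = 0.
  by move: wc0; rewrite (eq_ncomb c_split) ncombD wq0 addr0.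
have lt_c'N : (weight c' < N)%N.
  have weight_split : weight c = (weight c' + weight q)%N.
    by rewrite /weight -big_split; apply: eq_bigr => i _; apply: c_split.
  by rewrite -ltnS (leq_trans _ lt_cN) // weight_split -addn1 leq_add2l.
have [e ce] := IH c' lt_c'N wc'0.
exists (fun k => e k + (k == j))%N => i lti.
under eq_bigr do rewrite mulnDr; rewrite big_split /=.
by rewrite (sum_nat_mul_indicator (fun k => nth zero_fn F k i)) // -ce ?c_split.
Qed.

Lemma fin_gen_monoid_ext {d : nat} {P Q : 'rV[int]_d -> Prop} :
  (forall s, P s <-> Q s) -> fin_gen_monoid P -> fin_gen_monoid Q.
Proof.
move=> PQ [gens [Pgens genP]]; exists gens; split=> [x /Pgens /PQ //|s].
by rewrite -PQ.
Qed.

Lemma fin_gen_monoidE (d : nat) (P : 'rV[int]_d -> Prop) :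
  fin_gen_monoid P =
  exists gens, (forall g, g \in gens -> P g) /\
               forall s, P s <-> exists c, s = ncomb gens c.
Proof. by []. Qed.

Lemma fin_gen_monoid_kernel {d : nat} {W : nmodType} (f : {additive 'rV[int]_d -> W})
  {P : 'rV[int]_d -> Prop} :
  fin_gen_monoid P -> fin_gen_monoid (fun s => P s /\ f s = 0).
Proof.
rewrite !fin_gen_monoidE => -[gens [_ genP]].
have [F [solF coverF]] := ncomb_kernel_fin_gen (map f gens).
have f_gens c : f (ncomb gens c) = ncomb (map f gens) c by rewrite ncomb_map.
exists (map (ncomb gens) F); split=> [x /(nthP 0)[j]|s].
  rewrite size_map => ltj <-; rewrite (nth_map zero_fn) //.
  by split; [apply/genP; exists (nth zero_fn F j) | rewrite f_gens solF].
split=> [[/genP [c ->] fs0]|[e ->]].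
  rewrite f_gens in fs0; have [e ce] := coverF c fs0.
  by exists e; rewrite ncomb_nested; apply: eq_ncomb => i; rewrite -(size_map f) => /ce.
split; first by apply/genP; exists (fun i => \sum_(j < size F) nth zero_fn F j i * e j)%N;
  rewrite ncomb_nested.
rewrite -ncomb_map; apply: big1 => -[j /=]; rewrite !size_map => ltj _.
by rewrite (nth_map 0) ?size_map // (nth_map zero_fn) // f_gens solF ?mul0rn.
Qed.

Lemma character0 (Rr : realType) (r : nat) (t : 'rV[Rr[i]]_r) : character 0 t = 1.
Proof. by rewrite /character big1 // => i _; rewrite mxE expr0z. Qed.

Section InvariantValues.
Context {Rr : realType} {n r : nat} {A : comAlgType Rr[i]} {Rk : nat -> {pred A}}
  {act : 'rV[Rr[i]]_r -> A -> A} {vt : A -> 'rV[int]_n} {lam : 'M[int]_(1 + n, r)}.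

Hypothesis value_of_weight_vector : forall k f, f \in Rk k -> f != 0 ->
  exists m g, weight_vector Rk act k m g /\ vtil vt k g = vtil vt k f.
Hypothesis lam_weight : forall k m f, weight_vector Rk act k m f -> vtil vt k f *m lam = m.

Lemma weight_vector0 k f :
  weight_vector Rk act k 0 f <-> [/\ f \in Rk k, f != 0 & Defs.invariant act f].
Proof.
rewrite /weight_vector /Defs.invariant.
by split=> -[Rkf f0 act_f]; split=> // t /act_f; rewrite character0 scale1r.
Qed.

Lemma S_Rinv_ker s : S_Rinv Rk act vt s <-> S_R Rk vt s /\ s *m lam = 0.
Proof.
split=> [[k [f [Rkf f0 inv_f ->]]]|[[k [f [Rkf f0 ->]]] lam_s0]].
  by split; [exists k, f | apply/lam_weight/weight_vector0].
have [m [g [wg gf]]] := value_of_weight_vector k f Rkf f0.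
have m0 : m = 0 by rewrite -(lam_weight _ _ _ wg) gf.
by rewrite m0 in wg; have [Rkg g0 inv_g] := (weight_vector0 k g).1 wg; exists k, g.
Qed.

End InvariantValues.

Lemma lam_R_intr_eq0 (Rr : realType) (n r : nat) (lam : 'M[int]_(1 + n, r))
  (s : 'rV[int]_(1 + n)) : lam_R (Rr:=Rr) lam (map_mx intr s) = 0 <-> s *m lam = 0.
Proof.
rewrite /lam_R -map_mxM; split=> [/matrixP lam_s0|->]; last by rewrite map_mx0.
by apply/matrixP => i j; move/eqP: (lam_s0 i j); rewrite !mxE intr_eq0 => /eqP.
Qed.

Theorem mainTheorem16 (Rr : realType) (n r : nat) (A : comAlgType Rr[i])
  (Rk : nat -> {pred A}) (act : 'rV[Rr[i]]_r -> A -> A) (h : A)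
  (vt : A -> 'rV[int]_n) (vle : rel 'rV[int]_n) (lam : 'M[int]_(1 + n, r)) :
  setting_axioms Rk act h vt vle lam ->
  fin_gen_monoid (S_R Rk vt) ->
  generates_group (S_R Rk vt) ->
  (forall s, S_Rinv Rk act vt s <->
     (S_R Rk vt s /\ lam_R (Rr:=Rr) lam (map_mx intr s) = 0)) /\
  fin_gen_monoid (S_Rinv Rk act vt).
Proof.
(* That S generates Z^(1+n) only makes λ̃ unique; here λ̃ is given. *)
move=> [_ _ _ _ [value_of_weight_vector lam_weight]] S_fin_gen _.
have S_Rinv_kerE := S_Rinv_ker value_of_weight_vector lam_weight.
split=> [s|].
  by rewrite S_Rinv_kerE lam_R_intr_eq0.
apply: fin_gen_monoid_ext (fin_gen_monoid_kernel (mulmxr lam) S_fin_gen) => s.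
by rewrite S_Rinv_kerE.
Qed.
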